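(* Let $G$ be a group with a conjugation-closed generating set $X$ and let $g\in\mathrm{Mon}(X)$. Then $\mathrm{Fact}(G,g,\mathbf I)$ is isomorphic to the poset of nonempty chains of the interval $[1,g]$, ordered by inclusion.
   Context: $\mathrm{Mon}(X)$ is the submonoid generated by $X$; $\ell(x)$ is the minimal length of a product of elements of $X$ equal to $x$; $x\le y$ if there is $x'\in\mathrm{Mon}(X)$ with $xx'=y$ and $\ell(x)+\ell(x')=\ell(y)$; $[1,g]=\{x:x\le g\}$ with this order. A chain is a set $\{y_0<y_1<\cdots<y_k\}$ of elements of $[1,g]$. A linear factorization of $g$ is a row vector $[x_L\ x_1\ \cdots\ x_k\ x_R]$ ($k\ge0$) of elements of $\mathrm{Mon}(X)$ with $x_1,\dots,x_k\ne1$ ($x_L,x_R$ may be trivial), $\ell(x_L)+\ell(x_1)+\cdots+\ell(x_k)+\ell(x_R)=\ell(g)$ and $x_Lx_1\cdots x_kx_R=g$. Writing $x_0=x_L$, $x_{k+1}=x_R$, the merge at position $i\in\{0,\dots,k\}$ replaces the consecutive entries $x_i,x_{i+1}$ by the single entry $x_ix_{i+1}$ (giving a linear factorization with one fewer entry). $\mathrm{Fact}(G,g,\mathbf I)$ is the set of linear factorizations of $g$ with $\mathbf x\le\mathbf y$ iff $\mathbf x$ is obtained from $\mathbf y$ by a finite sequence of merges. *)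

From Stdlib Require Import ClassicalDescription Relation_Operators List.
From mathcomp Require Import all_boot.

Set Implicit Arguments.
Unset Strict Implicit.
Unset Printing Implicit Defensive.

Record GroupT := {
  carrier :> Type;
  gmul : carrier -> carrier -> carrier;
  gone : carrier;
  ginv : carrier -> carrier;
  gmulA : forall x y z, gmul x (gmul y z) = gmul (gmul x y) z;
  gmul1l : forall x, gmul gone x = x;
  gmul1r : forall x, gmul x gone = x;
  gmulVl : forall x, gmul (ginv x) x = gone;
  gmulVr : forall x, gmul x (ginv x) = gone
}.

Section Defs.
Variable G : GroupT.
Implicit Types (X : G -> Prop) (x y g : G).


Definition wprod (w : seq G) : G := foldr (@gmul G) (gone G) w.

Definition conj_closed X := forall x h, X x -> X (gmul (gmul (ginv h) x) h).

Definition generates X :=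
  forall g, exists w : seq G,
    List.Forall (fun y => X y \/ X (ginv y)) w /\ wprod w = g.

Definition word_of_length X x n :=
  exists w : seq G, List.Forall X w /\ size w = n /\ wprod w = x.

Definition Mon X x := exists n, word_of_length X x n.

(* ell(x): the minimal length of a product of elements of X equal to x
   (junk value 0 when x is not in Mon(X)) *)
Definition ell X x : nat :=
  match excluded_middle_informative (Mon X x) with
  | left H =>
      @ex_minn (fun n => is_left (excluded_middle_informative
                                    (word_of_length X x n)))
        (let: ex_intro n Hn := H in
         ex_intro _ n (match excluded_middle_informative (word_of_length X x n)
                          as b return Datatypes.is_true (is_left b) with
                       | left _ => erefl
                       | right Hn' => False_ind _ (Hn' Hn) end))
  | right _ => 0
  end.

Definition ple X x y :=
  Mon X x /\ exists x', Mon X x' /\ gmul x x' = y /\ ell X x + ell X x' = ell X y.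

Definition interval X g x := ple X x g.

Definition is_chain X g (C : G -> Prop) :=
  (exists x, C x) /\
  (exists l : list G, forall x, C x -> List.In x l) /\
  (forall x, C x -> interval X g x) /\
  (forall x y, C x -> C y -> ple X x y \/ ple X y x).

Definition Chain X g := { C : G -> Prop | is_chain X g C }.

Definition chain_le X g (C D : Chain X g) := forall x, proj1_sig C x -> proj1_sig D x.

(* linear factorizations [x_L x_1 ... x_k x_R] as sequences of length k+2 *)
Definition is_linfact X g (s : seq G) :=
  2 <= size s /\
  List.Forall (Mon X) s /\
  (forall i, 0 < i -> i.+1 < size s -> nth (gone G) s i <> gone G) /\
  \sum_(y <- s) ell X y = ell X g /\
  wprod s = g.

Definition LinFact X g := { s : seq G | is_linfact X g s }.

Definition merge (i : nat) (s : seq G) : seq G :=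
  take i s ++ (gmul (nth (gone G) s i) (nth (gone G) s i.+1)) :: drop i.+2 s.

Definition merge_step (s t : seq G) := exists i, i.+1 < size s /\ t = merge i s.

Definition fact_le X g (a b : LinFact X g) :=
  clos_refl_trans (seq G) merge_step (proj1_sig b) (proj1_sig a).

End Defs.

Definition order_iso (A B : Type) (leA : A -> A -> Prop) (leB : B -> B -> Prop) :=
  exists f : A -> B, bijective f /\ forall a b, leA a b <-> leB (f a) (f b).

(* A linear factorization [x_L; x_1; ...; x_k; x_R] of g is recorded by its
   partial products x_L, x_L x_1, ..., x_L x_1 ... x_k.  Since the lengths add
   up to ell g, each partial product is a prefix of the next and of g, and
   x_i <> 1 makes the sequence strictly increasing: it is a chain of [1, g],
   listed in increasing order.  Conversely the successive quotients
   y_0, y_0^-1 y_1, ..., y_k^-1 g of a chain y_0 < ... < y_k form a linear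
   factorization, and the two maps are inverse.  Merging at position i deletes
   exactly the i-th partial product, and every point of a chain can be deleted
   this way; hence merges correspond to inclusion of chains. *)

From Pilot Require Import Defs.
From Stdlib Require Import Classical ClassicalDescription IndefiniteDescription.
From Stdlib Require Import ProofIrrelevance FunctionalExtensionality.
From Stdlib Require Import PropExtensionality Relation_Operators List Sorted.
From mathcomp Require Import all_boot zify.

Set Implicit Arguments.
Unset Strict Implicit.
Unset Printing Implicit Defensive.

Lemma inj_surj_bijective (A B : Type) (f : A -> B) :
  injective f -> (forall b, exists a, f a = b) -> bijective f.
Proof.
move=> f_inj f_surj.
pose h b := proj1_sig (constructive_indefinite_description _ (f_surj b)).
have hK : cancel h f.
  by move=> b; rewrite /h; case: constructive_indefinite_description.
by exists h => // a; apply: f_inj; rewrite hK.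
Qed.

Lemma In_take_drop (A : Type) i (l : list A) x :
  In x (take i l ++ drop i.+1 l) -> In x l.
Proof.
elim: l i => [|a l IH] [|i] //=; first by rewrite drop0; right.
by case=> [<-|/IH]; [left | right].
Qed.

Section SortedLists.
Variables (A : Type) (R : A -> A -> Prop).

Lemma StronglySorted_consE a l :
  StronglySorted R (a :: l) <-> StronglySorted R l /\ Forall (R a) l.
Proof. by split=> [H|[]]; [exact: StronglySorted_inv H | constructor]. Qed.

Lemma StronglySorted_remove l1 y l2 :
  StronglySorted R (l1 ++ y :: l2) -> StronglySorted R (l1 ++ l2).
Proof.
elim: l1 => [|a l1 IH] /=; first by case/StronglySorted_consE.
case/StronglySorted_consE=> S F; constructor; first exact: IH.
move/Forall_app: F => [F1 F2].
by apply/Forall_app; split=> //; exact: Forall_inv_tail F2.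
Qed.

Lemma StronglySorted_total l x y : StronglySorted R l ->
  In x l -> In y l -> x = y \/ R x y \/ R y x.
Proof.
elim: l => [|a l IH] //= /StronglySorted_consE [S /Forall_forall F].
by move=> [<-|Hx] [<-|Hy]; auto.
Qed.

Hypothesis R_trans : forall x y z, R x y -> R y z -> R x z.

Lemma StronglySorted_cons2 a b l :
  R a b -> StronglySorted R (b :: l) -> StronglySorted R (a :: b :: l).
Proof.
move=> Rab Sbl; constructor=> //; have /StronglySorted_consE[_ Fb] := Sbl.
by constructor=> //; apply: Forall_impl Fb => y; apply: R_trans.
Qed.

Hypothesis R_irrefl : forall x, ~ R x x.

Lemma StronglySorted_eq l1 l2 :
  StronglySorted R l1 -> StronglySorted R l2 ->
  (forall x, In x l1 <-> In x l2) -> l1 = l2.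
Proof.
elim: l1 l2 => [|a l1 IH] [|b l2] //.
- by move=> _ _ /(_ b) [_ /(_ (List.in_eq _ _))].
- by move=> _ _ /(_ a) [/(_ (List.in_eq _ _))].
move=> /StronglySorted_consE [S1 /Forall_forall F1].
move=> /StronglySorted_consE [S2 /Forall_forall F2] E.
have ab : a = b.
  case: ((E a).1 (List.in_eq _ _)) => [//|/F2 Rba].
  case: ((E b).2 (List.in_eq _ _)) => [//|/F1 Rab].
  by case: (R_irrefl (R_trans Rab Rba)).
subst b; congr (_ :: _); apply: IH => // x; split=> Hx.
- case: ((E x).1 (List.in_cons _ _ _ Hx)) => // xa; subst.
  by case: (R_irrefl (F1 _ Hx)).
- case: ((E x).2 (List.in_cons _ _ _ Hx)) => // xa; subst.
  by case: (R_irrefl (F2 _ Hx)).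
Qed.

Lemma StronglySorted_insert a l : StronglySorted R l ->
  (forall y, In y l -> R a y \/ R y a) ->
  exists l', StronglySorted R l' /\ forall x, In x l' <-> x = a \/ In x l.
Proof.
elim: l => [|y l IH] S cmp.
  by exists [:: a]; split; [repeat constructor | move=> x /=; intuition].
case: (cmp y (List.in_eq _ _)) => [Ray|Rya].
  exists (a :: y :: l); split; first exact: StronglySorted_cons2.
  by move=> x /=; intuition.
have /StronglySorted_consE[S' /Forall_forall F] := S.
have [l' [S'' E]] := IH S' (fun z Hz => cmp z (List.in_cons _ _ _ Hz)).
exists (y :: l'); split.
  constructor=> //; apply/Forall_forall => z /E [->|/F] //.
by move=> x /=; rewrite E; intuition.
Qed.

Lemma StronglySorted_enum_exists (P : A -> Prop) (l : list A) :
  (forall x, P x -> In x l) ->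
  (forall x y, P x -> P y -> x <> y -> R x y \/ R y x) ->
  exists l', StronglySorted R l' /\ forall x, In x l' <-> P x.
Proof.
elim: l P => [|a l IH] P Pl cmp.
  by exists [::]; split=> [|x]; [constructor | split=> // /Pl].
have [l' [S E]] : exists l', StronglySorted R l' /\
    forall x, In x l' <-> P x /\ x <> a.
  apply: IH => [x [/Pl [->|//] //]|x y [Px _] [Py _]]; exact: cmp.
case: (classic (P a)) => Pa; last first.
  by exists l'; split=> // x; rewrite E; split=> [[]//|Px]; split=> // xa; subst.
have [l'' [S' E']] : exists l'', StronglySorted R l'' /\
    forall x, In x l'' <-> x = a \/ In x l'.
  apply: StronglySorted_insert S _ => y /E [Py ya]; apply: cmp => // ay.
  by subst.
exists l''; split=> // x; rewrite E' E; split=> [[->|[]]//|Px].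
by case: (classic (x = a)); [left | right].
Qed.

End SortedLists.

Section WordLength.
Variables (G : GroupT) (X : G -> Prop).
Local Notation "1" := (gone G).
Local Notation "x * y" := (gmul x y).
Local Notation "x ^-1" := (ginv x).

Lemma mulKg (p x : G) : p^-1 * (p * x) = x.
Proof. by rewrite gmulA gmulVl gmul1l. Qed.

Lemma mulKVg (p x : G) : p * (p^-1 * x) = x.
Proof. by rewrite gmulA gmulVr gmul1l. Qed.

Lemma mulg_eq_self (p x : G) : p * x = p -> x = 1.
Proof. by move=> E; rewrite -[x](mulKg p) E gmulVl. Qed.

Lemma wprod_cat (w1 w2 : seq G) : wprod (w1 ++ w2) = wprod w1 * wprod w2.
Proof. by elim: w1 => [|a w IH] /=; rewrite ?gmul1l // IH gmulA. Qed.

Lemma ell_word x : Mon X x -> word_of_length X x (ell X x).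
Proof.
rewrite /ell; case: excluded_middle_informative => // Mx _.
by case: ex_minnP => m; case: excluded_middle_informative.
Qed.

Lemma ell_min x n : word_of_length X x n -> ell X x <= n.
Proof.
move=> w; rewrite /ell; case: excluded_middle_informative => // Mx.
by case: ex_minnP => m _; apply; case: excluded_middle_informative.
Qed.

Lemma Mon1 : Mon X 1.
Proof. by exists 0, [::]. Qed.

Lemma ell1 : ell X 1 = 0.
Proof. by apply/eqP; rewrite -leqn0; apply: ell_min; exists [::]. Qed.

Lemma ell_eq0 x : Mon X x -> ell X x = 0 -> x = 1.
Proof.
by move=> /ell_word [w [_ [Sw Pw]]]; rewrite -Sw -Pw; case: w {Sw Pw}.
Qed.

Lemma word_of_length_mul x y n m :
  word_of_length X x n -> word_of_length X y m -> word_of_length X (x * y) (n + m).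
Proof.
move=> [w1 [F1 [<- <-]]] [w2 [F2 [<- <-]]].
by exists (w1 ++ w2); rewrite size_cat wprod_cat; split=> //; apply/Forall_app.
Qed.

Lemma MonM x y : Mon X x -> Mon X y -> Mon X (x * y).
Proof. by move=> [n wx] [m wy]; exists (n + m); apply: word_of_length_mul. Qed.

Lemma ell_mul x y : Mon X x -> Mon X y -> ell X (x * y) <= ell X x + ell X y.
Proof. by move=> Mx My; apply/ell_min/word_of_length_mul; apply: ell_word. Qed.

Lemma Mon_wprod (s : seq G) : Forall (Mon X) s -> Mon X (wprod s).
Proof. by elim=> [|x s' Mx _ M]; [apply: Mon1 | apply: MonM]. Qed.

Lemma ell_wprod (s : seq G) :
  Forall (Mon X) s -> ell X (wprod s) <= \sum_(y <- s) ell X y.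
Proof.
elim=> [|x s' Mx Ms IH]; first by rewrite ell1.
rewrite big_cons; apply: leq_trans (ell_mul Mx (Mon_wprod Ms)) _.
by rewrite leq_add2l.
Qed.

Lemma ple_mul x y :
  Mon X x -> Mon X y -> ell X x + ell X y = ell X (x * y) -> ple X x (x * y).
Proof. by move=> Mx My E; split=> //; exists y. Qed.

Lemma ple_refl x : Mon X x -> ple X x x.
Proof.
by move=> Mx; have := ple_mul Mx Mon1; rewrite gmul1r ell1 addn0; apply.
Qed.

Lemma ple_trans x y z : ple X x y -> ple X y z -> ple X x z.
Proof.
move=> [Mx [a [Ma [<- Ea]]]] [_ [b [Mb [<- Eb]]]].
have Mab := MonM Ma Mb.
split=> //; exists (a * b); rewrite -gmulA; do !split=> //.
by have := ell_mul Ma Mb; have := ell_mul Mx Mab; rewrite gmulA; lia.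
Qed.

Lemma ple_anti x y : ple X x y -> ple X y x -> x = y.
Proof.
move=> [_ [a [Ma [<- Ea]]]] [_ [b [_ [_ Eb]]]].
by rewrite (ell_eq0 Ma) ?gmul1r //; lia.
Qed.

Definition plt x y := ple X x y /\ x <> y.

Lemma plt_irrefl x : ~ plt x x.
Proof. by case. Qed.

Lemma plt_trans x y z : plt x y -> plt y z -> plt x z.
Proof.
move=> [xy nxy] [yz nyz]; split; first exact: ple_trans yz.
by move=> xz; subst z; apply: nxy; apply: ple_anti.
Qed.

End WordLength.

Section PartialProducts.
Variables (G : GroupT) (g : G).
Local Notation "x * y" := (gmul x y).
Local Notation "x ^-1" := (ginv x).
Local Notation merge := (@Defs.merge G).

Fixpoint prefixes (p : G) (s : seq G) : seq G :=
  if s is x :: s' then p :: prefixes (p * x) s' else [::].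

Fixpoint quotients (p : G) (ys : seq G) : seq G :=
  if ys is y :: ys' then p^-1 * y :: quotients y ys' else [:: p^-1 * g].

Definition chain_of_fact (s : seq G) : seq G :=
  if s is x :: s' then prefixes x s' else [::].

Definition fact_of_chain (ys : seq G) : seq G :=
  if ys is y :: ys' then y :: quotients y ys' else [::].

Lemma size_prefixes p s : size (prefixes p s) = size s.
Proof. by elim: s p => [|x s IH] p //=; rewrite IH. Qed.

Lemma prefixes_quotients p ys : prefixes p (quotients p ys) = p :: ys.
Proof. by elim: ys p => [|y ys IH] p /=; rewrite ?mulKVg ?IH. Qed.

Lemma quotients_prefixes p x s :
  p * wprod (x :: s) = g -> quotients p (prefixes (p * x) s) = x :: s.
Proof.
elim: s p x => [|y s IH] p x /= E; first by rewrite -E gmul1r mulKg.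
by rewrite mulKg IH //= -gmulA.
Qed.

Lemma fact_of_chainK ys : chain_of_fact (fact_of_chain ys) = ys.
Proof. by case: ys => [|y ys] //=; rewrite prefixes_quotients. Qed.

Lemma chain_of_factK s : chain_of_fact s <> [::] -> wprod s = g ->
  fact_of_chain (chain_of_fact s) = s.
Proof. by case: s => [|x [|y s]] //= _ E; rewrite quotients_prefixes. Qed.

Lemma merge0 (x y : G) s : merge 0 [:: x, y & s] = x * y :: s.
Proof. by rewrite /Defs.merge /= drop0. Qed.

Lemma mergeS i (x : G) s : merge i.+1 (x :: s) = x :: merge i s.
Proof. by []. Qed.

Lemma wprod_merge i (s : seq G) :
  i.+1 < size s -> wprod (merge i s) = wprod s.
Proof.
elim: i s => [|i IH] [|x [|y s]] // lt_is; first by rewrite merge0 /= gmulA.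
by rewrite mergeS /= IH.
Qed.

Lemma wprod_merge_step (s t : seq G) : merge_step s t -> wprod t = wprod s.
Proof. by move=> [i [lt_is ->]]; apply: wprod_merge. Qed.

Lemma prefixes_merge p i s : i.+1 < size s ->
  prefixes p (merge i s) =
  take i.+1 (prefixes p s) ++ drop i.+2 (prefixes p s).
Proof.
elim: i p s => [|i IH] p [|x [|y s]] // lt_is.
  by rewrite merge0 /= gmulA drop0.
by rewrite mergeS /= IH.
Qed.

Lemma chain_of_fact_merge i s : i.+1 < size s ->
  chain_of_fact (merge i s) =
  take i (chain_of_fact s) ++ drop i.+1 (chain_of_fact s).
Proof.
case: i s => [|i] [|x [|y s]] // lt_is; first by rewrite merge0 /= drop0.
by rewrite mergeS /= prefixes_merge.
Qed.

Lemma merge_step_chain_incl s t : merge_step s t ->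
  forall x, In x (chain_of_fact t) -> In x (chain_of_fact s).
Proof.
by move=> [i [lt_is ->]] x; rewrite chain_of_fact_merge //; apply: In_take_drop.
Qed.

Lemma merge_step_chain_remove s l1 y l2 : chain_of_fact s = l1 ++ y :: l2 ->
  merge_step s (merge (size l1) s) /\
  chain_of_fact (merge (size l1) s) = l1 ++ l2.
Proof.
move=> E; have lt_s : (size l1).+1 < size s.
  have := congr1 size E; case: s {E} => [|x s] /=;
  by rewrite ?size_prefixes size_cat /=; lia.
split; first by exists (size l1); split.
rewrite chain_of_fact_merge // E take_size_cat //.
by rewrite -add1n -drop_drop drop_size_cat //= drop0.
Qed.

End PartialProducts.

Section FactorizationsAndChains.
Variables (G : GroupT) (X : G -> Prop) (g : G).
Local Notation "1" := (gone G).
Local Notation "x * y" := (gmul x y).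
Local Notation plt := (plt X).
Local Notation quotients := (@quotients G g).
Local Notation fact_of_chain := (@fact_of_chain G g).
Local Notation merge := (@Defs.merge G).

Definition reduced (s : seq G) :=
  [/\ Forall (Mon X) s, wprod s = g & \sum_(y <- s) ell X y = ell X g].

Definition nontrivial_but_last (s : seq G) :=
  forall i, i.+1 < size s -> nth 1 s i <> 1.

Lemma is_linfactE s : is_linfact X g s <->
  [/\ 2 <= size s, reduced s & nontrivial_but_last (behead s)].
Proof.
rewrite /is_linfact /reduced /nontrivial_but_last.
case: s => [|x s] /=; first by split=> [[]|[]].
split=> [[? [? [Q [? ?]]]]|[? [? ? ?] Q]]; split=> //.
- by move=> i; apply: (Q i.+1).
- by do !split=> //; case=> // i _; apply: Q.
Qed.

Lemma reduced_cons2 p x s : reduced [:: p, x & s] <->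
  [/\ Mon X p, Mon X x, reduced (p * x :: s)
    & ell X (p * x) = ell X p + ell X x].
Proof.
rewrite /reduced !big_cons /=; split.
  move=> [/Forall_cons_iff [Mp /Forall_cons_iff [Mx Ms]] W L].
  have Mpx := MonM Mp Mx.
  have := ell_mul Mp Mx; have := ell_wprod Ms.
  have := ell_mul Mpx (Mon_wprod Ms); rewrite -gmulA W.
  by move=> *; split=> //; [split=> //; [constructor | lia] | lia].
move=> [Mp Mx [Ms W L] E]; rewrite gmulA W addnA -E L.
by split=> //; do 2!constructor=> //; case/Forall_cons_iff: Ms.
Qed.

Lemma reduced_interval p s : reduced (p :: s) -> interval X g p.
Proof.
rewrite /reduced big_cons /= => -[/Forall_cons_iff [Mp Ms] W L].
split=> //; exists (wprod s); split; first exact: Mon_wprod.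
split=> //; have := ell_wprod Ms; have := ell_mul Mp (Mon_wprod Ms).
by rewrite W; lia.
Qed.

Lemma plt_mul p x : Mon X p -> Mon X x -> x <> 1 ->
  ell X (p * x) = ell X p + ell X x -> plt p (p * x).
Proof.
move=> Mp Mx x_neq1 E; split; first exact: ple_mul.
by move/esym/mulg_eq_self.
Qed.

Definition sorted_chain (ys : seq G) :=
  StronglySorted plt ys /\ Forall (interval X g) ys.

Lemma reduced_prefixes p s : s <> [::] -> reduced (p :: s) ->
  nontrivial_but_last s -> sorted_chain (prefixes p s).
Proof.
elim: s p => [|x [|y s] IH] p // _ R Q.
  split; first by repeat constructor.
  by constructor; [apply: reduced_interval R | constructor].
have /reduced_cons2 [Mp Mx R' E] := R.
have Q' : nontrivial_but_last (y :: s) by move=> i; apply: (Q i.+1).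
have [S F] : sorted_chain (prefixes (p * x) (y :: s)) by apply: IH.
split; last by constructor=> //; apply: reduced_interval R.
apply: StronglySorted_cons2 S; first exact: plt_trans.
by apply: plt_mul => //; apply: (Q 0).
Qed.

Lemma quotients_reduced p ys : sorted_chain (p :: ys) ->
  reduced (p :: quotients p ys) /\ nontrivial_but_last (quotients p ys).
Proof.
elim: ys p => [|y ys IH] p.
  move=> [_ /Forall_cons_iff [[Mp [x [Mx [E L]]]] _]].
  rewrite /= -E mulKg; split=> [|[]//].
  rewrite /reduced !big_cons big_nil /= gmul1r addn0.
  by split=> //; repeat constructor.
move=> [/StronglySorted_consE [S F] /Forall_cons_iff [_ I]].
have /Forall_cons_iff [[[Mp [x [Mx [E L]]]] p_neq_y] _] := F; subst y.
have [R Q] := IH (p * x) (conj S I).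
rewrite /= mulKg; split; first by apply/reduced_cons2.
case=> [_ /= x_eq1|i]; last exact: Q.
by apply: p_neq_y; rewrite x_eq1 gmul1r.
Qed.

Lemma linfact_sorted_chain s : is_linfact X g s ->
  sorted_chain (chain_of_fact s) /\ chain_of_fact s <> [::].
Proof.
move=> /is_linfactE [size_s R Q].
case: s size_s R Q => [|x [|y s]] // _ R Q.
by split=> //; apply: reduced_prefixes.
Qed.

Lemma sorted_chain_linfact ys : ys <> [::] -> sorted_chain ys ->
  is_linfact X g (fact_of_chain ys).
Proof.
case: ys => [|y ys] // _ /quotients_reduced [R Q]; apply/is_linfactE.
by split=> //; case: ys {R Q}.
Qed.

Lemma chain_of_fact_mem_inj a b : is_linfact X g a -> is_linfact X g b ->
  (forall x, In x (chain_of_fact a) <-> In x (chain_of_fact b)) -> a = b.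
Proof.
move=> La Lb E; have [[Sa _] Na] := linfact_sorted_chain La.
have [[Sb _] Nb] := linfact_sorted_chain Lb.
have [_ [_ [_ [_ Wa]]]] := La; have [_ [_ [_ [_ Wb]]]] := Lb.
rewrite -(chain_of_factK Na Wa) -(chain_of_factK Nb Wb).
by rewrite (StronglySorted_eq (@plt_trans _ X) (@plt_irrefl _ X) Sa Sb E).
Qed.

Lemma sorted_chain_remove l1 y l2 :
  sorted_chain (l1 ++ y :: l2) -> sorted_chain (l1 ++ l2).
Proof.
move=> [S /Forall_app [I1 I2]]; split; first exact: StronglySorted_remove S.
by apply/Forall_app; split=> //; exact: Forall_inv_tail I2.
Qed.

Lemma linfact_merge_remove b l1 y l2 : is_linfact X g b ->
  chain_of_fact b = l1 ++ y :: l2 -> l1 ++ l2 <> [::] ->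
  exists2 b', merge_step b b' & is_linfact X g b' /\ chain_of_fact b' = l1 ++ l2.
Proof.
move=> Lb E N; have [step Eb'] := merge_step_chain_remove E.
exists (merge (size l1) b) => //; split=> //.
have [_ [_ [_ [_ Wb]]]] := Lb.
rewrite -(chain_of_factK _ (etrans (wprod_merge_step step) Wb)) Eb' //.
apply: sorted_chain_linfact N _; apply: (sorted_chain_remove (y := y)).
by rewrite -E; case: (linfact_sorted_chain Lb).
Qed.

Lemma fact_le_chain_incl a b : clos_refl_trans (seq G) (@merge_step G) b a ->
  forall x, In x (chain_of_fact a) -> In x (chain_of_fact b).
Proof.
elim=> {a b} [s t /merge_step_chain_incl //|//|s t u _ IH1 _ IH2] x.
by move/IH2/IH1.
Qed.

Lemma chain_incl_fact_le a b : is_linfact X g a -> is_linfact X g b ->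
  (forall x, In x (chain_of_fact a) -> In x (chain_of_fact b)) ->
  clos_refl_trans (seq G) (@merge_step G) b a.
Proof.
move=> La; have [n] := ubnP (size (chain_of_fact b)).
elim: n b => // n IH b size_b Lb incl_ab.
have [_ Na] := linfact_sorted_chain La.
case: (classic (forall x, In x (chain_of_fact b) -> In x (chain_of_fact a))).
  move=> incl_ba; suff -> : a = b by apply: rt_refl.
  apply: chain_of_fact_mem_inj La Lb _ => x.
  by split; [apply: incl_ab | apply: incl_ba].
move=> not_incl; have [y not_y] := not_all_ex_not _ _ not_incl.
have [y_b y_a] := imply_to_and _ _ not_y.
have [l1 [l2 E]] := in_split _ _ y_b.
have incl_a : forall x, In x (chain_of_fact a) -> In x (l1 ++ l2).
  move=> x x_a; have := incl_ab x x_a; rewrite E !in_app_iff /=.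
  by case=> [|[xy|]]; [left | subst; case: y_a | right].
have N : l1 ++ l2 <> [::].
  move=> E0; case: (chain_of_fact a) Na incl_a => [|z l] // _.
  by move/(_ z (List.in_eq _ _)); rewrite E0.
have [b' step [Lb' Eb']] := linfact_merge_remove Lb E N.
apply: rt_trans (rt_step _ _ _ _ step) (IH b' _ Lb' _); last by rewrite Eb'.
by move: size_b; rewrite Eb' E !size_cat /=; lia.
Qed.

Lemma is_chain_linfact s : is_linfact X g s ->
  is_chain X g (fun x => In x (chain_of_fact s)).
Proof.
case/linfact_sorted_chain; case: (chain_of_fact s) => [|y ys] [S I] // _.
split; first by exists y; left.
split; first by exists (y :: ys).
have I' := proj1 (Forall_forall _ _) I.
split=> [x /I' //|x z x_ys z_ys].
case: (StronglySorted_total S x_ys z_ys) => [<-|[[xz _]|[zx _]]];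
  [left | by left | by right].
by case: (I' x x_ys) => Mx _; apply: ple_refl.
Qed.

Definition chain_of_linfact (s : LinFact X g) : Chain X g :=
  exist _ _ (is_chain_linfact (proj2_sig s)).

Lemma chain_of_linfact_inj : injective chain_of_linfact.
Proof.
move=> [a La] [b Lb] /(congr1 (@proj1_sig _ _)) /= E.
apply: subset_eq_compat; apply: chain_of_fact_mem_inj La Lb _ => x.
by have /= -> := congr1 (@^~ x) E.
Qed.

Lemma chain_of_linfact_surj (C : Chain X g) : exists s, chain_of_linfact s = C.
Proof.
case: C => C [[x0 Cx0] [[l Cl] [CI Ccmp]]].
have [ys [S E]] : exists ys, StronglySorted plt ys /\ forall x, In x ys <-> C x.
  apply: (StronglySorted_enum_exists (@plt_trans _ X) Cl) => x y Cx Cy x_neq_y.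
  case: (Ccmp x y Cx Cy) => [xy|yx]; [left | right]; split=> //.
  by move/esym.
have N : ys <> [::] by move=> ys0; have := (E x0).2 Cx0; rewrite ys0.
have I : Forall (interval X g) ys by apply/Forall_forall => x /E; apply: CI.
exists (exist _ _ (sorted_chain_linfact N (conj S I))); apply: subset_eq_compat.
rewrite /= fact_of_chainK; apply: functional_extensionality => x.
by apply: propositional_extensionality.
Qed.

Lemma chain_of_linfact_mono a b :
  fact_le a b <-> chain_le (chain_of_linfact a) (chain_of_linfact b).
Proof.
case: a b => [a La] [b Lb]; split; first exact: fact_le_chain_incl.
exact: chain_incl_fact_le.
Qed.

End FactorizationsAndChains.

Theorem proposition3p4 (G : GroupT) (X : G -> Prop) (g : G) :
  conj_closed X -> generates X -> Mon X g ->
  order_iso (@fact_le G X g) (@chain_le G X g).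
Proof.
move=> _ _ _; exists (@chain_of_linfact G X g).
split; last exact: chain_of_linfact_mono.
apply: inj_surj_bijective; first exact: chain_of_linfact_inj.
exact: chain_of_linfact_surj.
Qed.
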